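(* Let $d\ge2$, $(S,\mathfrak n,\mathbf k)$ a complete regular local ring with $\mathbf k$ algebraically closed of characteristic not dividing $d$, and $0\ne f\in\mathfrak n^2$. Let $X\in\mathrm{MF}_S^d(f)$ be indecomposable of size $n$ and assume $X\cong TX$. Then there exists an $S$-linear map $\phi:S^n\to S^n$ with $\phi^d=f\cdot I_n$ and $X\cong(\phi,\phi,\dots,\phi)$.
   Context: $\mathrm{MF}_S^d(f)$ is the category of matrix factorizations of $f$ with $d$ factors: objects $X=(\phi_1:F_2\to F_1,\dots,\phi_d:F_1\to F_d)$, $F_i$ finitely generated free $S$-modules of equal rank $n$ (the size of $X$), with $\phi_1\cdots\phi_d=f\cdot1_{F_1}$; morphisms $(\alpha_1,\dots,\alpha_d)$ with $\alpha_i\phi_i=\phi_i'\alpha_{i+1}$ (indices mod $d$). The shift functor is $T(\phi_1,\dots,\phi_d)=(\phi_2,\dots,\phi_d,\phi_1)$. *)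

From HB Require Import structures.
From mathcomp Require Import all_boot all_order all_algebra.
Set Implicit Arguments. Unset Strict Implicit. Unset Printing Implicit Defensive.
Import GRing.Theory.
Local Open Scope ring_scope.

Section LocalRings.
Variable S : comUnitRingType.

Definition subset_of (I J : S -> Prop) := forall x, I x -> J x.

Definition is_ideal (I : S -> Prop) : Prop :=
  I 0 /\ (forall x y, I x -> I y -> I (x + y)) /\ (forall s x, I x -> I (s * x)).

Definition gen_ideal (xs : seq S) : S -> Prop :=
  fun x => exists cs : seq S, size cs = size xs /\
    x = \sum_(i < size xs) cs`_i * xs`_i.

Definition fin_gen (I : S -> Prop) : Prop :=
  exists xs : seq S, forall x, I x <-> gen_ideal xs x.

Definition noetherian : Prop := forall I, is_ideal I -> fin_gen I.

Definition prime_ideal (P : S -> Prop) : Prop :=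
  is_ideal P /\ ~ P 1 /\ (forall x y, P (x * y) -> P x \/ P y).

Definition prime_chain (e : nat) (P : nat -> S -> Prop) : Prop :=
  (forall i, (i <= e)%N -> prime_ideal (P i)) /\
  (forall i, (i < e)%N -> subset_of (P i) (P i.+1) /\ ~ subset_of (P i.+1) (P i)).

Definition krull_dim_eq (e : nat) : Prop :=
  (exists P, prime_chain e P) /\ ~ (exists P, prime_chain e.+1 P).

(* the set of non-units; S is local iff it is an ideal (the maximal ideal) *)
Definition mx_ideal : S -> Prop := fun x => x \isn't a GRing.unit.

Definition local_ring : Prop := (1 : S) != 0 /\ is_ideal mx_ideal.

Definition emb_dim_eq (e : nat) : Prop :=
  (exists xs : seq S, size xs = e /\ forall x, mx_ideal x <-> gen_ideal xs x) /\
  (forall xs : seq S, (size xs < e)%N -> ~ (forall x, mx_ideal x <-> gen_ideal xs x)).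

Definition regular_local_ring : Prop :=
  local_ring /\ noetherian /\ exists e, krull_dim_eq e /\ emb_dim_eq e.

(* membership in the power n^k of the maximal ideal n *)
Fixpoint mx_pow (k : nat) : S -> Prop :=
  match k with
  | 0 => fun _ => True
  | k'.+1 => fun x => exists ys zs : seq S, size ys = size zs /\
      (forall i, (i < size ys)%N -> mx_ideal ys`_i) /\
      (forall i, (i < size zs)%N -> mx_pow k' zs`_i) /\
      x = \sum_(i < size ys) ys`_i * zs`_i
  end.

(* n-adically complete and separated: S -> lim S/n^k is bijective *)
Definition complete_local : Prop :=
  (forall x, (forall k, mx_pow k x) -> x = 0) /\
  (forall a : nat -> S, (forall k, mx_pow k (a k.+1 - a k)) ->
     exists x, forall k, mx_pow k (x - a k)).

(* the residue field S/n is algebraically closed: every monic polynomial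
   of positive degree has a root modulo n *)
Definition residue_alg_closed : Prop :=
  forall p : {poly S}, p \is monic -> (1 < size p)%N -> exists a, mx_ideal p.[a].

(* char of the residue field does not divide d, i.e. d * 1 is nonzero in S/n *)
Definition residue_char_ndvd (d : nat) : Prop := ~ mx_ideal (d%:R).

End LocalRings.

Section MF.
Variable S : comUnitRingType.

(* an object with d factors and size n: phi i : F_{i+1} -> F_i (indices mod d,
   0-based: phi i is the paper's phi_{i+1}); matrices act on column vectors *)
Definition mfobj (d n : nat) := 'I_d -> 'M[S]_n.

Definition mx_chain (d n : nat) (X : mfobj d n) : 'M[S]_n :=
  foldr (fun i acc => X i *m acc) 1%:M (enum 'I_d).

Definition is_MF (f : S) (d n : nat) (X : mfobj d n) : Prop :=
  mx_chain X = f%:M.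

Definition is_mor (d n m : nat) (X : mfobj d n) (Y : mfobj d m)
  (al : 'I_d -> 'M[S]_(m, n)) : Prop :=
  forall i : 'I_d, al i *m X i = Y i *m al (ordS i).

Definition mf_iso (d n m : nat) (X : mfobj d n) (Y : mfobj d m) : Prop :=
  exists (al : 'I_d -> 'M[S]_(m, n)) (be : 'I_d -> 'M[S]_(n, m)),
    is_mor X Y al /\ is_mor Y X be /\
    (forall i, be i *m al i = 1%:M) /\ (forall i, al i *m be i = 1%:M).

Definition mf_shift (d n : nat) (X : mfobj d n) : mfobj d n :=
  fun i => X (ordS i).

Definition mf_dsum (d a b : nat) (Y : mfobj d a) (Z : mfobj d b) : mfobj d (a + b) :=
  fun i => block_mx (Y i) 0 0 (Z i).

Definition mf_indecomposable (f : S) (d n : nat) (X : mfobj d n) : Prop :=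
  (0 < n)%N /\
  ~ (exists (a b : nat) (Y : mfobj d a) (Z : mfobj d b),
       (0 < a)%N /\ (0 < b)%N /\ is_MF f Y /\ is_MF f Z /\ mf_iso X (mf_dsum Y Z)).

Definition mx_pow_n (n : nat) (M : 'M[S]_n) (k : nat) : 'M[S]_n :=
  iter k (mulmx M) 1%:M.

End MF.

From Pilot Require Import Defs.
From mathcomp Require Import all_boot all_order all_algebra.
From mathcomp Require Import ring.
Set Implicit Arguments. Unset Strict Implicit. Unset Printing Implicit Defensive.
Import GRing.Theory.
Local Open Scope ring_scope.

(* An isomorphism (α_i) : X -> TX satisfies α_i φ_i = φ_{i+1} α_{i+1} (indices mod d).
   The composites γ_k = α_{k-1} ⋯ α_0 conjugate φ_k α_k to ψ = φ_0 α_0, and ψ commutes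
   with σ = γ_d.  Over a complete local ring with algebraically closed residue field in
   which d is a unit, σ^-1 has a d-th root ρ that is an n-adic limit of polynomials in σ:
   interpolate d-th roots of the inverted eigenvalues of σ modulo n, so that
   1 - U(σ)^d σ is nilpotent modulo n by Cayley-Hamilton, then apply Newton's iteration
   u -> u (1 + (1 - u^d σ) / d).  Hence ρ commutes with ψ, and G_k = γ_k ρ^k is an
   isomorphism from (ψρ, ..., ψρ) to X. *)

Section MaximalIdeal.
Variable S : comUnitRingType.
Local Notation mx_ideal := (@Defs.mx_ideal S).

Lemma mx_ideal0 : mx_ideal 0.
Proof. by rewrite /Defs.mx_ideal unitr0. Qed.

Lemma mx_idealMl s x : mx_ideal x -> mx_ideal (s * x).
Proof. by rewrite /Defs.mx_ideal unitrM negb_and => ->; rewrite orbT. Qed.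

Lemma mx_idealN x : mx_ideal x -> mx_ideal (- x).
Proof. by rewrite -mulN1r; apply: mx_idealMl. Qed.

Hypothesis S_local : local_ring S.

Lemma mx_idealD x y : mx_ideal x -> mx_ideal y -> mx_ideal (x + y).
Proof. by case: S_local => _ [_ [addm _]]; apply: addm. Qed.

Lemma mx_idealB x y : mx_ideal x -> mx_ideal y -> mx_ideal (x - y).
Proof. by move=> mx my; apply/mx_idealD/mx_idealN. Qed.

Lemma unitrBmx u x : u \is a GRing.unit -> mx_ideal x -> u - x \is a GRing.unit.
Proof.
move=> u_unit mx; apply/negPn/negP => mux.
by have := mx_idealD mux mx; rewrite subrK /Defs.mx_ideal u_unit.
Qed.

End MaximalIdeal.

Section MaximalIdealPowers.
Variable S : comUnitRingType.
Local Notation mx_ideal := (@Defs.mx_ideal S).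
Local Notation mx_pow := (@mx_pow S).

Lemma mx_powSE k x : mx_pow k.+1 x <->
  exists l : seq (S * S),
    (forall p, p \in l -> mx_ideal p.1 /\ mx_pow k p.2) /\ x = \sum_(p <- l) p.1 * p.2.
Proof.
split.
  case=> ys [zs [eq_size [ys_m [zs_mk ->]]]]; exists (zip ys zs); split.
    move=> p /(nthP (0, 0)) [i]; rewrite size_zip eq_size minnn => lt_i <-.
    by rewrite nth_zip //=; split; [apply: ys_m; rewrite eq_size | apply: zs_mk].
  rewrite (big_nth (0, 0)) size_zip eq_size minnn big_mkord.
  by apply: eq_bigr => i _; rewrite nth_zip.
case=> l [l_mk ->]; exists (unzip1 l), (unzip2 l); rewrite !size_map.
split=> //; split; [|split].
- by move=> i lt_il; rewrite (nth_map (0, 0)) //; apply: (l_mk _ (mem_nth _ lt_il)).1.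
- by move=> i lt_il; rewrite (nth_map (0, 0)) //; apply: (l_mk _ (mem_nth _ lt_il)).2.
by rewrite (big_nth (0, 0)) big_mkord; apply: eq_bigr => i _; rewrite !(nth_map (0, 0)).
Qed.

Lemma mx_pow_zero k : mx_pow k 0.
Proof. by case: k => // k; apply/mx_powSE; exists [::]; rewrite big_nil. Qed.

Lemma mx_powD k x y : mx_pow k x -> mx_pow k y -> mx_pow k (x + y).
Proof.
case: k => // k /mx_powSE[l1 [l1_mk ->]] /mx_powSE[l2 [l2_mk ->]].
apply/mx_powSE; exists (l1 ++ l2); rewrite big_cat; split=> // p.
by rewrite mem_cat => /orP[/l1_mk | /l2_mk].
Qed.

Lemma mx_powMl k s x : mx_pow k x -> mx_pow k (s * x).
Proof.
case: k => // k /mx_powSE[l [l_mk ->]].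
apply/mx_powSE; exists [seq (s * p.1, p.2) | p <- l]; split.
  by move=> _ /mapP[p /l_mk[p1_m p2_mk] ->]; split=> //; apply: mx_idealMl.
by rewrite big_map mulr_sumr; apply: eq_bigr => p _; rewrite mulrA.
Qed.

Lemma mx_powMr k s x : mx_pow k x -> mx_pow k (x * s).
Proof. by rewrite mulrC; apply: mx_powMl. Qed.

Lemma mx_powN k x : mx_pow k x -> mx_pow k (- x).
Proof. by rewrite -mulN1r; apply: mx_powMl. Qed.

Lemma mx_powB k x y : mx_pow k x -> mx_pow k y -> mx_pow k (x - y).
Proof. by move=> mx my; apply/mx_powD/mx_powN. Qed.

Lemma mx_pow_sum k (I : eqType) (r : seq I) (F : I -> S) :
  (forall i, i \in r -> mx_pow k (F i)) -> mx_pow k (\sum_(i <- r) F i).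
Proof.
elim: r => [|i r IHr] Fr_mk; first by rewrite big_nil; apply: mx_pow_zero.
rewrite big_cons; apply: mx_powD; first by apply: Fr_mk; rewrite mem_head.
by apply: IHr => j j_r; apply: Fr_mk; rewrite in_cons j_r orbT.
Qed.

Lemma mx_pow_mx_ideal k y z : mx_ideal y -> mx_pow k z -> mx_pow k.+1 (y * z).
Proof.
move=> y_m z_mk; apply/mx_powSE; exists [:: (y, z)]; rewrite big_seq1.
by split=> // p; rewrite inE => /eqP->.
Qed.

Lemma mx_powM a b x y : mx_pow a x -> mx_pow b y -> mx_pow (a + b) (x * y).
Proof.
elim: a x => [|a IHa] x; first by rewrite add0n => _; apply: mx_powMl.
move=> /mx_powSE[l [l_ma ->]] y_mb; rewrite mulr_suml addSn.
apply: mx_pow_sum => p /l_ma[p1_m p2_ma]; rewrite -mulrA.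
by apply: mx_pow_mx_ideal => //; apply: IHa.
Qed.

Lemma mx_pow_le k l x : (k <= l)%N -> mx_pow l x -> mx_pow k x.
Proof.
move=> /subnK <-; elim: (l - k)%N x => // j IHj x.
rewrite addSn => /mx_powSE[p [p_mk ->]].
by apply: mx_pow_sum => q /p_mk[_ q2_mk]; apply/mx_powMl/IHj.
Qed.

End MaximalIdealPowers.

Section ResiduePolynomials.
Variable S : comUnitRingType.
Local Notation mx_ideal := (@Defs.mx_ideal S).

Lemma horner_congr_mx (p : {poly S}) a b :
  mx_ideal (b - a) -> mx_ideal (p.[b] - p.[a]).
Proof.
have /factor_theorem[q eq_q] : root (p - p.[a]%:P) a by rewrite /root !hornerE subrr.
have := congr1 (horner^~ b) eq_q; rewrite hornerM hornerXsubC !hornerE => ->.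
exact: mx_idealMl.
Qed.

Lemma residue_dth_root (d : nat) a : residue_alg_closed S -> (0 < d)%N ->
  a \is a GRing.unit -> exists r, mx_ideal (r ^+ d * a - 1).
Proof.
move=> S_acl d_gt0 a_unit.
have [|r] := S_acl ('X^d - a^-1%:P) (monicXnsubC _ d_gt0); first by rewrite size_XnsubC.
rewrite !hornerE => r_root; exists r.
have -> : r ^+ d * a - 1 = a * (r ^+ d - a^-1) by rewrite mulrBr mulrV // mulrC.
exact: mx_idealMl.
Qed.

Lemma poly_interpolate_step (l : seq S) b (p : {poly S}) r :
  \prod_(a <- l) (b - a) \is a GRing.unit ->
  exists q : {poly S}, q.[b] = r /\ forall a, a \in l -> q.[a] = p.[a].
Proof.
set pi := \prod_(a <- l) _ => pi_unit.
pose q := p + ((r - p.[b]) / pi) *: \prod_(a <- l) ('X - a%:P).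
have qE x : q.[x] = p.[x] + (r - p.[b]) / pi * \prod_(a <- l) (x - a).
  rewrite hornerD hornerZ horner_prod; congr (_ + _ * _).
  by apply: eq_bigr => a _; rewrite hornerXsubC.
exists q; split; first by rewrite qE mulrVK // addrC subrK.
by move=> a a_l; rewrite qE (big_rem a a_l) /= subrr mul0r mulr0 addr0.
Qed.

Hypothesis S_local : local_ring S.

Definition poly_over_mx (p : {poly S}) : Prop := forall i, mx_ideal p`_i.

Lemma poly_over_mx0 : poly_over_mx 0.
Proof. by move=> i; rewrite coef0; apply: mx_ideal0. Qed.

Lemma poly_over_mxC c : mx_ideal c -> poly_over_mx c%:P.
Proof. by move=> c_m i; rewrite coefC; case: eqP => // _; apply: mx_ideal0. Qed.

Lemma poly_over_mxD p q : poly_over_mx p -> poly_over_mx q -> poly_over_mx (p + q).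
Proof. by move=> p_m q_m i; rewrite coefD; apply: mx_idealD. Qed.

Lemma poly_over_mxB p q : poly_over_mx p -> poly_over_mx q -> poly_over_mx (p - q).
Proof. by move=> p_m q_m i; rewrite coefB; apply: mx_idealB. Qed.

Lemma poly_over_mxMl p q : poly_over_mx p -> poly_over_mx (q * p).
Proof.
move=> p_m i; rewrite coefM; apply: (big_ind mx_ideal) => //.
- exact: mx_ideal0.
- exact: mx_idealD.
by move=> j _; apply: mx_idealMl.
Qed.

Lemma poly_over_mxMr p q : poly_over_mx p -> poly_over_mx (p * q).
Proof. by rewrite mulrC; apply: poly_over_mxMl. Qed.

Hypothesis S_acl : residue_alg_closed S.

Lemma monic_split_mod_mx p : p \is monic ->
  exists l, poly_over_mx (p - \prod_(a <- l) ('X - a%:P)).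
Proof.
have [N] := ubnP (size p); elim: N p => // N IHN p; rewrite ltnS => size_p p_monic.
have [size_p1 | size_p_gt1] := leqP (size p) 1.
  move/monicP: p_monic; rewrite (size1_polyC size_p1) lead_coefC => ->.
  by exists [::]; rewrite big_nil subrr; apply: poly_over_mx0.
have [a pa_m] := S_acl p_monic size_p_gt1.
set q := p - p.[a]%:P.
have /factor_theorem[q' eq_q] : root q a by rewrite /root !hornerE subrr.
have small_pa : (size (- p.[a]%:P) < size p)%N.
  by rewrite size_polyN (leq_ltn_trans (size_polyC_leq1 _)).
have size_q : size q = size p by rewrite size_polyDl.
have q_monic : q \is monic by rewrite monicE lead_coefDl // -monicE.
have q'_monic : q' \is monic by rewrite -(monicMr q' (monicXsubC a)) -eq_q.
have size_q' : (size q' < N)%N.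
  apply: leq_trans size_p; rewrite -size_q eq_q size_Mmonic ?monicXsubC ?monic_neq0 //.
  by rewrite size_XsubC addn2.
have [l l_split] := IHN q' size_q' q'_monic; exists (a :: l).
have -> : p = q' * ('X - a%:P) + p.[a]%:P by rewrite -eq_q subrK.
rewrite big_cons; set P := \prod_(j <- l) _ in l_split *.
have -> : q' * ('X - a%:P) + p.[a]%:P - ('X - a%:P) * P
    = (q' - P) * ('X - a%:P) + p.[a]%:P by ring.
by apply: poly_over_mxD; [apply: poly_over_mxMr | apply: poly_over_mxC].
Qed.

Lemma poly_dth_root_mod (d : nat) (l : seq S) : (0 < d)%N ->
  (forall a, a \in l -> a \is a GRing.unit) ->
  exists p : {poly S}, forall a, a \in l -> mx_ideal (p.[a] ^+ d * a - 1).
Proof.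
move=> d_gt0; elim: l => [|b l IHl] l_unit; first by exists 0.
have [p p_root] : exists p : {poly S}, forall a, a \in l -> mx_ideal (p.[a] ^+ d * a - 1).
  by apply: IHl => a a_l; apply: l_unit; rewrite in_cons a_l orbT.
have b_unit : b \is a GRing.unit by apply: l_unit; rewrite mem_head.
have [/allP b_far | /allPn[c c_l bc_m]] := boolP (all (fun a => b - a \is a GRing.unit) l).
  have [r r_root] := residue_dth_root S_acl d_gt0 b_unit.
  have [|q [qb qa]] := @poly_interpolate_step l b p r.
    by apply: unitr_prod_in => a /b_far.
  by exists q => a /predU1P[-> | a_l]; rewrite ?qb ?qa //; apply: p_root.
exists p => a /predU1P[-> | a_l]; last exact: p_root.
have := horner_congr_mx (p ^+ d * 'X) bc_m; rewrite !hornerE => pb_pc.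
have -> : p.[b] ^+ d * b - 1 = (p.[b] ^+ d * b - p.[c] ^+ d * c) + (p.[c] ^+ d * c - 1).
  by rewrite addrA subrK.
exact/mx_idealD/p_root.
Qed.

Lemma poly_pow_split_mod (g : {poly S}) (l : seq S) :
  (forall a, a \in l -> mx_ideal g.[a]) ->
  exists h, poly_over_mx (g ^+ size l - \prod_(a <- l) ('X - a%:P) * h).
Proof.
elim: l => [|a l IHl] g_roots.
  by exists 1; rewrite big_nil expr0 mulr1 subrr; apply: poly_over_mx0.
have [h h_split] : exists h, poly_over_mx (g ^+ size l - \prod_(b <- l) ('X - b%:P) * h).
  by apply: IHl => b b_l; apply: g_roots; rewrite in_cons b_l orbT.
have /factor_theorem[q eq_q] : root (g - g.[a]%:P) a by rewrite /root !hornerE subrr.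
exists (q * h); rewrite big_cons /= exprS.
set P := \prod_(b <- l) _ in h_split *; set E := g ^+ size l - P * h in h_split.
have -> : g ^+ size l = P * h + E by rewrite /E addrC subrK.
have -> : g = q * ('X - a%:P) + g.[a]%:P by rewrite -eq_q subrK.
have -> : (q * ('X - a%:P) + g.[a]%:P) * (P * h + E) - ('X - a%:P) * P * (q * h)
    = g.[a]%:P * (P * h) + (q * ('X - a%:P) + g.[a]%:P) * E by ring.
apply: poly_over_mxD; last exact: poly_over_mxMl.
by apply/poly_over_mxMr/poly_over_mxC/g_roots; rewrite mem_head.
Qed.

End ResiduePolynomials.

Lemma expr1Dn_sq (R : comNzRingType) (m : nat) (y : R) :
  exists w, (1 + y) ^+ m = 1 + m%:R * y + y ^+ 2 * w.
Proof.
elim: m => [|m [w IHm]]; first by exists 0; rewrite expr0 mul0r mulr0 !addr0.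
by exists (m%:R + w + w * y); rewrite exprSr IHm mulrSr; ring.
Qed.

Section NewtonIteration.
Variables (R : comNzRingType) (d : nat) (c x : R).
Hypothesis dc1 : d%:R * c = 1.

Definition dth_root_defect u := 1 - u ^+ d * x.

Definition newton_step u := u * (1 + c * dth_root_defect u).

Lemma newton_stepB u : newton_step u - u = u * c * dth_root_defect u.
Proof. by rewrite /newton_step; ring. Qed.

Lemma dth_root_defect_newton_step u :
  exists w, dth_root_defect (newton_step u) = dth_root_defect u ^+ 2 * w.
Proof.
set e := dth_root_defect u; have [w binom] := expr1Dn_sq d (c * e).
have ud : u ^+ d * x = 1 - e by rewrite /e /dth_root_defect opprB addrC subrK.
exists (1 - c ^+ 2 * w + e * c ^+ 2 * w).
rewrite /newton_step {1}/dth_root_defect exprMn mulrAC ud binom.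
rewrite [d%:R * _]mulrA dc1; ring.
Qed.

Lemma dth_root_defect_newton u k :
  exists w, dth_root_defect (iter k newton_step u) = dth_root_defect u ^+ k.+1 * w.
Proof.
elim: k => [|k [v IHk]]; first by exists 1; rewrite mulr1 expr1.
have [w ->] := dth_root_defect_newton_step (iter k newton_step u).
by exists (dth_root_defect u ^+ k * v ^+ 2 * w); rewrite IHk !exprS; ring.
Qed.

End NewtonIteration.

Section MatrixIdealPowers.
Variables (S : comUnitRingType) (n : nat).

Definition mx_in_pow k (A : 'M[S]_n.+1) : Prop := forall i j, mx_pow k (A i j).

Lemma mx_in_pow_zero k : mx_in_pow k 0.
Proof. by move=> i j; rewrite mxE; apply: mx_pow_zero. Qed.

Lemma mx_in_powD k A B : mx_in_pow k A -> mx_in_pow k B -> mx_in_pow k (A + B).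
Proof. by move=> Ak Bk i j; rewrite mxE; apply: mx_powD. Qed.

Lemma mx_in_powB k A B : mx_in_pow k A -> mx_in_pow k B -> mx_in_pow k (A - B).
Proof. by move=> Ak Bk i j; rewrite !mxE; apply: mx_powB. Qed.

Lemma mx_in_powM a b A B :
  mx_in_pow a A -> mx_in_pow b B -> mx_in_pow (a + b) (A * B).
Proof.
by move=> Aa Bb i j; rewrite -mulmxE mxE; apply: mx_pow_sum => l _; apply: mx_powM.
Qed.

Lemma mx_in_powMl k A B : mx_in_pow k A -> mx_in_pow k (B * A).
Proof.
by move=> Ak i j; rewrite -mulmxE mxE; apply: mx_pow_sum => l _; apply: mx_powMl.
Qed.

Lemma mx_in_powMr k A B : mx_in_pow k A -> mx_in_pow k (A * B).
Proof.
by move=> Ak i j; rewrite -mulmxE mxE; apply: mx_pow_sum => l _; apply: mx_powMr.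
Qed.

Lemma mx_in_powX a A m : mx_in_pow a A -> mx_in_pow (a * m) (A ^+ m).
Proof.
move=> Aa; elim: m => [|m IHm]; first by move=> i j; rewrite muln0.
by rewrite exprSr mulnS addnC; apply: mx_in_powM.
Qed.

Lemma mx_in_pow_le k l A : (k <= l)%N -> mx_in_pow l A -> mx_in_pow k A.
Proof. by move=> le_kl Al i j; apply: mx_pow_le (Al i j). Qed.

Lemma mx_in_pow_subX k A B m : mx_in_pow k (A - B) -> mx_in_pow k (A ^+ m - B ^+ m).
Proof.
move=> ABk; elim: m => [|m IHm]; first by rewrite subrr; apply: mx_in_pow_zero.
have -> : A ^+ m.+1 - B ^+ m.+1 = A * (A ^+ m - B ^+ m) + (A - B) * B ^+ m.
  by rewrite !exprS mulrBr mulrBl addrA subrK.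
by apply: mx_in_powD; [apply: mx_in_powMl | apply: mx_in_powMr].
Qed.

Lemma mx_in_pow1_horner (A : 'M[S]_n.+1) q : poly_over_mx q -> mx_in_pow 1 (horner_mx A q).
Proof.
move=> q_m i j; rewrite -[q]coefK poly_def rmorph_sum summxE.
apply: mx_pow_sum => l _; change (mx_pow 1 (horner_mx A (q`_l *: 'X^l) i j)).
by rewrite horner_mxZ mxE; apply: mx_pow_mx_ideal.
Qed.

Lemma mx_in_pow_eq0 A : (forall x : S, (forall k, mx_pow k x) -> x = 0) ->
  (forall k, mx_in_pow k A) -> A = 0.
Proof.
by move=> S_sep Ak; apply/matrixP => i j; rewrite mxE; apply: S_sep => k; apply: Ak.
Qed.

Lemma mx_in_pow_limit (u : nat -> 'M[S]_n.+1) : complete_local S ->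
  (forall k, mx_in_pow k (u k.+1 - u k)) ->
  exists A, forall k, mx_in_pow k (A - u k).
Proof.
case=> _ S_complete u_cauchy.
have [F F_lim] : exists F : 'I_n.+1 * 'I_n.+1 -> S,
    forall ij k, mx_pow k (F ij - u k ij.1 ij.2).
  apply: (@fin_all_exists _ (fun=> S) (fun ij x => forall k, mx_pow k (x - u k ij.1 ij.2))).
  by case=> i j; apply: S_complete => k; have := u_cauchy k i j; rewrite !mxE.
by exists (\matrix_(i, j) F (i, j)) => k i j; rewrite !mxE; apply: F_lim.
Qed.

End MatrixIdealPowers.

Section MatrixDthRoot.
Variables (S : comUnitRingType) (n d : nat).
Hypotheses (S_local : local_ring S) (S_acl : residue_alg_closed S).
Hypotheses (S_complete : complete_local S) (d_unit : (d%:R : S) \is a GRing.unit).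
Variable sigma : 'M[S]_n.+1.
Hypothesis sigma_unit : sigma \is a GRing.unit.
Local Notation mx_ideal := (@Defs.mx_ideal S).

Let c : {poly S} := (d%:R^-1)%:P.

Let dc1 : d%:R * c = 1.
Proof. by rewrite -(rmorph_nat (@polyC S)) -polyCM mulrV. Qed.

Local Notation defect := (dth_root_defect d 'X).
Local Notation newton := (newton_step d c 'X).

Lemma horner_mx_defect U : horner_mx sigma (defect U) = 1 - horner_mx sigma U ^+ d * sigma.
Proof. by rewrite rmorphB rmorph1 rmorphM rmorphXn /= horner_mx_X. Qed.

Lemma char_poly_split_roots_unit l :
  poly_over_mx (char_poly sigma - \prod_(a <- l) ('X - a%:P)) ->
  forall a, a \in l -> a \is a GRing.unit.
Proof.
move=> sigma_split a a_l; have := sigma_split 0%N; rewrite coefB char_poly_det => split0.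
have det_unit : (-1) ^+ n.+1 * \det sigma \is a GRing.unit.
  by rewrite unitrM unitrX ?unitrN1 // -unitmxE.
have := unitrBmx S_local det_unit split0.
rewrite opprB addrC subrK -horner_coef0 horner_prod.
under eq_bigr do rewrite hornerXsubC sub0r.
by move/unitr_prodP/(_ a a_l isT); rewrite unitrN.
Qed.

Lemma horner_mx_split_pow l g :
  poly_over_mx (char_poly sigma - \prod_(a <- l) ('X - a%:P)) ->
  (forall a, a \in l -> mx_ideal g.[a]) -> mx_in_pow 1 (horner_mx sigma g ^+ size l).
Proof.
set P := \prod_(a <- l) _ => sigma_split g_roots.
have [h gh] := poly_pow_split_mod S_local g_roots.
have : poly_over_mx (g ^+ size l - char_poly sigma * h).
  have -> : g ^+ size l - char_poly sigma * h
      = (g ^+ size l - P * h) - (char_poly sigma - P) * h by ring.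
  exact/(poly_over_mxB S_local)/poly_over_mxMr.
move/(mx_in_pow1_horner sigma).
by rewrite rmorphB rmorphM /= Cayley_Hamilton mul0r subr0 rmorphXn.
Qed.

Lemma mx_dth_root_mod : exists U, mx_in_pow 1 (horner_mx sigma (defect U)).
Proof.
have [l sigma_split] := monic_split_mod_mx S_local S_acl (char_poly_monic sigma).
have d_gt0 : (0 < d)%N by rewrite lt0n; apply: contraTneq d_unit => ->; rewrite unitr0.
have [p p_root] := poly_dth_root_mod S_local S_acl d_gt0
  (char_poly_split_roots_unit sigma_split).
have defect_p : mx_in_pow 1 (horner_mx sigma (defect p) ^+ size l).
  apply: horner_mx_split_pow sigma_split _ => a a_l.
  by rewrite /dth_root_defect !hornerE -opprB; apply/mx_idealN/p_root.
exists (iter (size l) newton p); have [w ->] := dth_root_defect_newton 'X dc1 p (size l).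
by rewrite rmorphM rmorphXn exprSr; apply/mx_in_powMr/mx_in_powMr.
Qed.

Lemma mx_dth_root_lift U : mx_in_pow 1 (horner_mx sigma (defect U)) ->
  exists rho, rho ^+ d * sigma = 1 /\
    forall psi, GRing.comm psi sigma -> GRing.comm psi rho.
Proof.
move=> defect_U; pose u k := horner_mx sigma (iter k newton U).
have defect_u k : mx_in_pow k.+1 (1 - u k ^+ d * sigma).
  rewrite -horner_mx_defect; have [w ->] := dth_root_defect_newton 'X dc1 U k.
  rewrite rmorphM rmorphXn; apply: mx_in_powMr.
  by have := mx_in_powX k.+1 defect_U; rewrite mul1n.
have u_cauchy k : mx_in_pow k (u k.+1 - u k).
  rewrite /u -rmorphB iterS newton_stepB rmorphM; apply: mx_in_powMl.
  by have := defect_u k; rewrite -horner_mx_defect; apply: mx_in_pow_le.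
have [rho rho_lim] := mx_in_pow_limit S_complete u_cauchy.
have [S_sep _] := S_complete.
exists rho; split.
  apply/eqP; rewrite -subr_eq0; apply/eqP; apply: mx_in_pow_eq0 S_sep _ => k.
  have -> : rho ^+ d * sigma - 1
      = (rho ^+ d - u k ^+ d) * sigma - (1 - u k ^+ d * sigma).
    by rewrite mulrBl opprB addrA subrK.
  apply: mx_in_powB; first exact/mx_in_powMr/mx_in_pow_subX/rho_lim.
  exact: mx_in_pow_le (leqnSn k) (defect_u k).
move=> psi psi_sigma; have psi_u k : GRing.comm psi (u k) by apply: comm_mx_horner.
apply/eqP; rewrite -subr_eq0; apply/eqP; apply: mx_in_pow_eq0 S_sep _ => k.
have -> : psi * rho - rho * psi = psi * (rho - u k) - (rho - u k) * psi.
  by rewrite mulrBr mulrBl psi_u opprB addrA subrK.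
by apply: mx_in_powB; [apply: mx_in_powMl | apply: mx_in_powMr].
Qed.

Lemma mx_inv_dth_root : exists rho, rho ^+ d * sigma = 1 /\
  forall psi, GRing.comm psi sigma -> GRing.comm psi rho.
Proof. by have [U] := mx_dth_root_mod; apply: mx_dth_root_lift. Qed.

End MatrixDthRoot.

Section TwistedShift.
Variables (R : unitRingType) (X A : nat -> R).
Hypothesis A_unit : forall k, A k \is a GRing.unit.
Hypothesis A_mor : forall k, A k * X k = X k.+1 * A k.+1.

Fixpoint twist k : R := if k is k'.+1 then A k' * twist k' else 1.

Lemma twist_unit k : twist k \is a GRing.unit.
Proof. by elim: k => [|k IHk] /=; rewrite ?unitr1 ?unitrMr. Qed.

Lemma twist_intertwine k : X k * A k * twist k = twist k * (X 0 * A 0).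
Proof.
elim: k => [|k IHk] /=; first by rewrite mulr1 mul1r.
by rewrite -A_mor -[RHS]mulrA -IHk !mulrA.
Qed.

Lemma comm_twist d : X d = X 0 -> A d = A 0 -> GRing.comm (X 0 * A 0) (twist d).
Proof. by move=> Xd Ad; rewrite /GRing.comm -twist_intertwine Xd Ad. Qed.

Lemma twist_root_intertwine rho k : GRing.comm (X 0 * A 0) rho ->
  X k * (twist k.+1 * rho ^+ k.+1) = twist k * rho ^+ k * (X 0 * A 0 * rho).
Proof.
move=> psi_rho; have psi_rhok := commrX k psi_rho.
by rewrite /= exprSr !mulrA twist_intertwine -(mulrA (twist k)) psi_rhok !mulrA.
Qed.

End TwistedShift.

Lemma mx_chain_const (S : comUnitRingType) (d n : nat) (phi : 'M[S]_n) :
  mx_chain (fun _ : 'I_d => phi) = mx_pow_n phi d.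
Proof.
rewrite /mx_chain /mx_pow_n -[in RHS](size_enum_ord d).
by elim: (enum 'I_d) => //= _ s ->.
Qed.

Lemma mf_iso_sym (S : comUnitRingType) (d n m : nat) (X : mfobj S d n) (Y : mfobj S d m) :
  mf_iso X Y -> mf_iso Y X.
Proof. by case=> al [be [al_mor [be_mor [beK alK]]]]; exists be, al. Qed.

Section MorphismsOfUnits.
Variables (S : comUnitRingType) (d n : nat).
Local Notation mfobj := (mfobj S d.+1 n.+1).
Implicit Types (X Y : mfobj) (al : 'I_d.+1 -> 'M[S]_n.+1).

Lemma ordS_inZp k : ordS (inZp k : 'I_d.+1) = inZp k.+1.
Proof. by apply/val_inj; rewrite /= -addn1 modnDml addn1. Qed.

Lemma inZp_period : inZp d.+1 = inZp 0 :> 'I_d.+1.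
Proof. by apply/val_inj; rewrite /= modnn mod0n. Qed.

Lemma mx_chainE X : mx_chain X = \prod_(i < d.+1) X i.
Proof.
have foldrE s : foldr (fun i acc => X i *m acc) 1%:M s = \prod_(i <- s) X i.
  by elim: s => [|i s IHs] /=; rewrite ?big_nil // big_cons IHs mulmxE.
by rewrite /mx_chain foldrE enumT.
Qed.

Lemma is_mor_prod X Y al : is_mor X Y al -> forall k,
  al (inZp 0) * \prod_(i < k) X (inZp i) = \prod_(i < k) Y (inZp i) * al (inZp k).
Proof.
move=> al_mor; elim=> [|k IHk]; first by rewrite !big_ord0 mulr1 mul1r.
have := al_mor (inZp k); rewrite !mulmxE ordS_inZp => mor_k.
by rewrite !big_ord_recr /= mulrA IHk -mulrA mor_k mulrA.
Qed.

Lemma is_MF_mor f X Y al : is_mor X Y al -> (forall i, al i \is a GRing.unit) ->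
  is_MF f X -> is_MF f Y.
Proof.
move=> al_mor al_unit; rewrite /is_MF !mx_chainE => chainX.
have := is_mor_prod al_mor d.+1; rewrite inZp_period.
under eq_bigr do rewrite valZpK; under [in RHS]eq_bigr do rewrite valZpK.
have f_central : al (inZp 0) * f%:M = f%:M * al (inZp 0) by rewrite -!mulmxE scalar_mxC.
by rewrite chainX f_central => /(mulIr (al_unit _)) <-.
Qed.

Lemma is_morV X Y al : is_mor X Y al -> (forall i, al i \is a GRing.unit) ->
  is_mor Y X (fun i => (al i)^-1).
Proof.
move=> al_mor al_unit i; have := al_mor i; rewrite !mulmxE => mor_i.
by apply: (mulrI (al_unit i)); rewrite mulVKr // mulrA mor_i mulrK.
Qed.

Lemma mf_iso_units X Y al : is_mor X Y al -> (forall i, al i \is a GRing.unit) ->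
  mf_iso X Y.
Proof.
move=> al_mor al_unit; exists al, (fun i => (al i)^-1).
split=> //; split; first exact: is_morV.
by split=> i; rewrite mulmxE ?mulVr ?mulrV.
Qed.

End MorphismsOfUnits.

Section ShiftInvariant.
Variables (S : comUnitRingType) (d n : nat).
Hypotheses (S_local : local_ring S) (S_acl : residue_alg_closed S).
Hypotheses (S_complete : complete_local S) (d_unit : (d.+1%:R : S) \is a GRing.unit).

Lemma shift_invariant_const_mor (X : mfobj S d.+1 n.+1) al :
  is_mor X (mf_shift X) al -> (forall i, al i \is a GRing.unit) ->
  exists phi G, (forall i, G i \is a GRing.unit) /\ is_mor (fun _ => phi) X G.
Proof.
move=> al_mor al_unit; pose Xn k := X (inZp k); pose A k := al (inZp k).
have A_mor k : A k * Xn k = Xn k.+1 * A k.+1.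
  by have := al_mor (inZp k); rewrite !mulmxE /mf_shift ordS_inZp.
have A_unit k : A k \is a GRing.unit by apply: al_unit.
set sigma := twist A d.+1.
have [rho [rho_root rho_comm]] :=
  mx_inv_dth_root S_local S_acl S_complete d_unit (twist_unit A_unit d.+1).
have rho_unit : rho \is a GRing.unit.
  have : rho *m (rho ^+ d * sigma) = 1%:M by rewrite mulmxE mulrA -exprS.
  by case/mulmx1_unit.
have sigma_rho : sigma * rho ^+ d.+1 = 1.
  by rewrite (commrX _ (rho_comm _ (commr_refl sigma))).
have psi_rho : GRing.comm (Xn 0 * A 0) rho.
  by apply/rho_comm/(comm_twist A_mor); rewrite /Xn /A inZp_period.
pose G k := twist A k * rho ^+ k.
have G_period : G d.+1 = G 0 by rewrite /G /= expr0 mulr1 sigma_rho.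
exists (Xn 0 * A 0 * rho), (fun i => G i); split.
  by move=> i; rewrite /G unitrMl ?unitrX // twist_unit.
move=> i; rewrite !mulmxE -(twist_root_intertwine A_mor _ psi_rho) -/(G i.+1).
have -> : X i = Xn i by rewrite /Xn valZpK.
have -> : ordS i = inZp i.+1 by rewrite -ordS_inZp valZpK.
congr (_ * _); rewrite /=; have := ltn_ord i; rewrite leq_eqVlt.
by case/orP=> [/eqP-> | lt_id]; rewrite ?modnn ?G_period ?modn_small.
Qed.

End ShiftInvariant.

Theorem corollary4p4 (S : comUnitRingType) (d : nat) (f : S) (n : nat)
  (X : mfobj S d n) :
  (2 <= d)%N ->
  regular_local_ring S -> complete_local S ->
  residue_alg_closed S -> residue_char_ndvd S d ->
  f != 0 -> mx_pow 2 f ->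
  is_MF f X -> mf_indecomposable f X ->
  mf_iso X (mf_shift X) ->
  exists phi : 'M[S]_n,
    mx_pow_n phi d = f%:M /\ mf_iso X (fun _ : 'I_d => phi).
Proof.
move=> d_ge2 [S_local _] S_complete S_acl d_ndvd _ _ X_MF [n_gt0 _].
case=> al [be [al_mor [_ [_ alK]]]].
case: d => [//|d] in d_ge2 X al be al_mor alK d_ndvd X_MF *.
case: n => [//|n] in n_gt0 X al be al_mor alK X_MF *.
have al_unit i : al i \is a GRing.unit by case: (mulmx1_unit (alK i)).
have d_unit : (d.+1%:R : S) \is a GRing.unit by apply/negPn/negP.
have [phi [G [G_unit G_mor]]] :=
  shift_invariant_const_mor S_local S_acl S_complete d_unit al_mor al_unit.
exists phi; split; last exact/mf_iso_sym/(mf_iso_units G_mor G_unit).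
rewrite -mx_chain_const; apply: is_MF_mor (is_morV G_mor G_unit) _ X_MF.
by move=> i; rewrite unitrV.
Qed.
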